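(* For the relay Markov decision process described in the context, the optimal thresholds $(L_1^*,L_2^* )$ (of the optimal threshold policy: wait in state $(i,0)$ iff $i\le L_1^*$, wait in state $(0,j)$ iff $j\le L_2^*$, otherwise transmit) are $$(L_1^*,L_2^* )=\arg\min_{L_1,L_2} \; C_t\,\tau(L_1,L_2)+C_h\,\lambda(L_1,L_2),$$ where $$\tau(L_1,L_2)=p_1p_2\pi_{0,0}+p_2\sum_{i=1}^{L_1}\pi_{i,0}+p_1\sum_{j=1}^{L_2}\pi_{0,j}+p_1(1-p_2)\pi_{L_1,0}+p_2(1-p_1)\pi_{0,L_2},$$ $$\lambda(L_1,L_2)=\sum_{i=1}^{L_1} i\,\pi_{i,0}+\sum_{j=1}^{L_2} j\,\pi_{0,j},$$ with $$\pi_{0,0}=\frac{1}{\frac{1-\alpha^{L_1+1}}{1-\alpha}+\frac{1-1/\alpha^{L_2+1}}{1-1/\alpha}-1},\qquad \pi_{i,0}=\alpha^i\pi_{0,0},\qquad \pi_{0,j}=\pi_{0,0}/\alpha^j,\qquad \alpha=\frac{(1-p_2)p_1}{(1-p_1)p_2}.$$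
   Context: A relay node keeps two queues $q_1,q_2$. Time is slotted; in each slot a packet arrives to $q_i$ with probability $p_i\in(0,1)$ ($i=1,2$), independently across queues and slots, at most one per queue per slot. $Y_n=(Y_n^1,Y_n^2)$ is the number of packets in $(q_1,q_2)$ at the end of slot $n$ just before the transmission opportunity, and $A_n\in\{0,1\}$ is the action ($0$ = do nothing, $1$ = transmit; transmitting when both queues are nonempty sends one XOR-coded packet containing one packet from each queue, counted as one transmission). If $Y^1_n+Y^2_n=0$ then $A_n=0$; if $Y^1_nY^2_n>0$ then $A_n=1$. The state space is $\{(i,j)\in\mathbb{Z}_{\ge0}^2:\min(i,j)\le1\}$. With $\hat p_1=(1-p_1)(1-p_2)$, $\hat p_2=p_1(1-p_2)$, $\hat p_3=(1-p_1)p_2$, $\hat p_4=p_1p_2$, $[x]^+=\max(x,0)$: $P_1((i,j),([i-1]^+,[j-1]^+))=\hat p_1$, $P_1((i,j),(\max(i,1),[j-1]^+))=\hat p_2$, $P_1((i,j),([i-1]^+,\max(j,1)))=\hat p_3$, $P_1((i,j),(\max(i,1),\max(j,1)))=\hat p_4$, $P_0((i,j),(i,j))=\hat p_1$, $P_0((i,j),(i+1,j))=\hat p_2$, $P_0((i,j),(i,j+1))=\hat p_3$, $P_0((i,j),(i+1,j+1))=\hat p_4$. One-step cost: $C(Y_n,A_n)=C_h([Y^1_n-A_n]^+ + [Y^2_n-A_n]^+)+C_tA_n$, with transmission cost $C_t>0$ and per-slot holding cost $C_h>0$. The objective is the long-run average cost $V(u)=\lim_{N\to\infty}\frac{1}{N+1}E_u[\sum_{n=0}^N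 C(Y_n,A_n)\mid Y_0=(0,0)]$. The minimum over $(L_1,L_2)$ ranges over pairs of nonnegative integers. *)

From Stdlib Require Import Reals Lra Lia.
From Coquelicot Require Import Coquelicot.
Open Scope R_scope.

(* States (i,j) : number of packets in (q1,q2) just before the transmission
   opportunity.  Actions: 0 = wait, 1 = transmit. *)
Definition state := (nat * nat)%type.

Definition pb (p : R) (b : bool) : R := if b then p else 1 - p.

(* With probabilities pb p1 b1 * pb p2 b2 this realizes exactly the kernels
   P_1 (a = 1) and P_0 (a = 0) of the paper:
   (false,false) ~ hat p_1, (true,false) ~ hat p_2,
   (false,true) ~ hat p_3,  (true,true) ~ hat p_4.
   nat subtraction is truncated, so (i - 1)%nat = [i-1]^+. *)
Definition next (s : state) (a : nat) (b1 b2 : bool) : state :=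
  let (i, j) := s in
  if Nat.eqb a 0 then
    ((i + (if b1 then 1 else 0))%nat, (j + (if b2 then 1 else 0))%nat)
  else
    ((if b1 then Nat.max i 1 else (i - 1)%nat),
     (if b2 then Nat.max j 1 else (j - 1)%nat)).

Definition thr_policy (L1 L2 : nat) (s : state) : nat :=
  let (i, j) := s in
  if Nat.eqb (i + j) 0 then 0%nat
  else if Nat.ltb 0 (i * j) then 1%nat
  else if Nat.eqb j 0 then (if Nat.leb i L1 then 0%nat else 1%nat)
  else (if Nat.leb j L2 then 0%nat else 1%nat).

Definition cost (Ct Ch : R) (s : state) (a : nat) : R :=
  let (i, j) := s in
  Ch * (INR (i - a) + INR (j - a)) + Ct * INR a.

(* Expectation E[g(Y_n) | Y_0 = s] of the Markov chain driven by the
   stationary deterministic policy pol (first-step decomposition). *)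
Fixpoint expect (p1 p2 : R) (pol : state -> nat) (n : nat) (s : state)
  (g : state -> R) : R :=
  match n with
  | O => g s
  | S m =>
      let a := pol s in
      pb p1 false * pb p2 false * expect p1 p2 pol m (next s a false false) g
    + pb p1 true  * pb p2 false * expect p1 p2 pol m (next s a true false) g
    + pb p1 false * pb p2 true  * expect p1 p2 pol m (next s a false true) g
    + pb p1 true  * pb p2 true  * expect p1 p2 pol m (next s a true true) g
  end.

Definition avg_cost (p1 p2 Ct Ch : R) (pol : state -> nat) (N : nat) : R :=
  / INR (S N) *
  sum_f_R0 (fun n => expect p1 p2 pol n (0%nat, 0%nat)
                        (fun s => cost Ct Ch s (pol s))) N.

Definition V (p1 p2 Ct Ch : R) (pol : state -> nat) : R :=
  real (Lim_seq (avg_cost p1 p2 Ct Ch pol)).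

Definition V_thr (p1 p2 Ct Ch : R) (L1 L2 : nat) : R :=
  V p1 p2 Ct Ch (thr_policy L1 L2).

Fixpoint sum1 (f : nat -> R) (n : nat) : R :=
  match n with
  | O => 0
  | S m => sum1 f m + f (S m)
  end.

Definition alpha (p1 p2 : R) : R := ((1 - p2) * p1) / ((1 - p1) * p2).

Definition pi00 (p1 p2 : R) (L1 L2 : nat) : R :=
  let a := alpha p1 p2 in
  / ((1 - a ^ (L1 + 1)) / (1 - a) + (1 - / a ^ (L2 + 1)) / (1 - / a) - 1).

Definition pi_i0 (p1 p2 : R) (L1 L2 i : nat) : R :=
  alpha p1 p2 ^ i * pi00 p1 p2 L1 L2.

Definition pi_0j (p1 p2 : R) (L1 L2 j : nat) : R :=
  pi00 p1 p2 L1 L2 / alpha p1 p2 ^ j.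

Definition tau (p1 p2 : R) (L1 L2 : nat) : R :=
  p1 * p2 * pi00 p1 p2 L1 L2
  + p2 * sum1 (fun i => pi_i0 p1 p2 L1 L2 i) L1
  + p1 * sum1 (fun j => pi_0j p1 p2 L1 L2 j) L2
  + p1 * (1 - p2) * pi_i0 p1 p2 L1 L2 L1
  + p2 * (1 - p1) * pi_0j p1 p2 L1 L2 L2.

Definition lambda (p1 p2 : R) (L1 L2 : nat) : R :=
  sum1 (fun i => INR i * pi_i0 p1 p2 L1 L2 i) L1
  + sum1 (fun j => INR j * pi_0j p1 p2 L1 L2 j) L2.

Definition objective (p1 p2 Ct Ch : R) (L1 L2 : nat) : R :=
  Ct * tau p1 p2 L1 L2 + Ch * lambda p1 p2 L1 L2.

From Stdlib Require Import Reals Lra Lia List.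
From Coquelicot Require Import Coquelicot.
Open Scope R_scope.

(* Under the threshold policy (L1, L2) the chain started at (0,0) never leaves the
   finite "cross" of states with one coordinate at most 1.  Its post-decision state
   (the queue contents right after the transmission opportunity) lives on the two
   axes and performs a birth-death walk: it moves away from the origin along the
   axis of q1 with probability p1 (1 - p2), towards it with probability (1 - p1) p2,
   and symmetrically on the axis of q2.  The stationary law of this walk is the
   geometric law pi of the statement, and C_t tau + C_h lambda is exactly the
   pi-average of the expected one-step cost.  Solving the Poisson equation of the walk
   axis by axis gives a bounded relative value function h with h + g = cost + P h on
   the cross for g := C_t tau + C_h lambda; telescoping then shows that the long-run
   average cost of every threshold policy equals its objective, so the two argmins
   coincide. *)

Lemma sum1_ext f g n :
  (forall i, (1 <= i <= n)%nat -> f i = g i) -> sum1 f n = sum1 g n.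
Proof.
  induction n as [|n IH]; intro H; cbn [sum1]; [reflexivity|].
  rewrite IH by (intros; apply H; lia); rewrite H by lia; reflexivity.
Qed.

Lemma sum1_scal x f n : sum1 (fun i => x * f i) n = x * sum1 f n.
Proof. induction n as [|n IH]; cbn [sum1]; [|rewrite IH]; ring. Qed.

Lemma sum1_mul_sub f h x n :
  sum1 (fun i => f i * (h i - x)) n = sum1 (fun i => f i * h i) n - x * sum1 f n.
Proof. induction n as [|n IH]; cbn [sum1]; [|rewrite IH]; ring. Qed.

Lemma sum1_pow_nonneg x n : 0 < x -> 0 <= sum1 (pow x) n.
Proof.
  intro Hx; induction n as [|n IH]; cbn [sum1]; [lra|].
  pose proof (pow_lt x (S n) Hx); lra.
Qed.

Lemma geometric_sum1 x n : x <> 1 -> (1 - x ^ (n + 1)) / (1 - x) = 1 + sum1 (pow x) n.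
Proof.
  intro Hx.
  assert (H : (1 + sum1 (pow x) n) * (1 - x) = 1 - x ^ (n + 1)).
  { induction n as [|n IH]; cbn [sum1]; [simpl; ring|].
    rewrite Nat.add_1_r in *. simpl in *. nra. }
  rewrite <- H; field; lra.
Qed.

Lemma sum1_pow_affine a b x y n :
  sum1 (fun i => a ^ i * (x * INR i + y + x * (a * b - b))) n
  = x * sum1 (fun i => INR i * a ^ i) n + y * sum1 (pow a) n + x * b * (a ^ S n - a).
Proof. induction n as [|n IH]; cbn [sum1]; [|rewrite IH, S_INR]; simpl; ring. Qed.

Lemma list_bounded {A : Type} (f : A -> R) (l : list A) :
  exists M, forall x, In x l -> -M <= f x <= M.
Proof.
  induction l as [|x0 l [M HM]]; [exists 0; intros x []|].
  exists (Rmax (Rabs (f x0)) M). intros x [<- | Hx].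
  - pose proof (Rmax_l (Rabs (f x0)) M). unfold Rabs in *; destruct Rcase_abs; lra.
  - specialize (HM x Hx). pose proof (Rmax_r (Rabs (f x0)) M). lra.
Qed.

Lemma is_lim_seq_bounded_over_n (g M : R) (e : nat -> R) :
  (forall n, -M <= e n <= M) -> is_lim_seq (fun n => g + e n / INR (S n)) g.
Proof.
  intro He.
  assert (Hinv : is_lim_seq (fun n => / INR (S n)) 0).
  { apply (is_lim_seq_inv _ p_infty); [|discriminate].
    exact (proj1 (is_lim_seq_incr_1 INR p_infty) is_lim_seq_INR). }
  assert (Hlim : forall k, is_lim_seq (fun n => g + k * / INR (S n)) g).
  { intro k. replace (Finite g) with (Rbar_plus g (Rbar_mult k 0))
      by (simpl; f_equal; ring).
    apply is_lim_seq_plus'; [apply is_lim_seq_const|].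
    apply (is_lim_seq_scal_l _ k 0 Hinv). }
  apply is_lim_seq_le_le with (u := fun n => g + (- M) * / INR (S n))
                              (w := fun n => g + M * / INR (S n)); [|apply Hlim..].
  intro n. specialize (He n).
  assert (0 < / INR (S n)) by (apply Rinv_0_lt_compat, lt_0_INR; lia).
  unfold Rdiv; split; nra.
Qed.

(** * Average cost from a bounded solution of the Poisson equation *)

Definition step (p1 p2 : R) (pol : state -> nat) (f : state -> R) (s : state) : R :=
  let a := pol s in
      pb p1 false * pb p2 false * f (next s a false false)
    + pb p1 true  * pb p2 false * f (next s a true false)
    + pb p1 false * pb p2 true  * f (next s a false true)
    + pb p1 true  * pb p2 true  * f (next s a true true).

Lemma expect_S p1 p2 pol n s f :
  expect p1 p2 pol (S n) s f = expect p1 p2 pol n s (step p1 p2 pol f).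
Proof.
  revert s; induction n as [|n IH]; intro s; [reflexivity|].
  change (expect p1 p2 pol (S (S n)) s f) with
    (let a := pol s in
        pb p1 false * pb p2 false * expect p1 p2 pol (S n) (next s a false false) f
      + pb p1 true  * pb p2 false * expect p1 p2 pol (S n) (next s a true false) f
      + pb p1 false * pb p2 true  * expect p1 p2 pol (S n) (next s a false true) f
      + pb p1 true  * pb p2 true  * expect p1 p2 pol (S n) (next s a true true) f).
  cbv zeta; rewrite !IH; reflexivity.
Qed.

Lemma expect_const p1 p2 pol n s k : expect p1 p2 pol n s (fun _ => k) = k.
Proof.
  revert s; induction n as [|n IH]; intro s; cbn [expect]; [reflexivity|].
  rewrite !IH; unfold pb; ring.
Qed.

Lemma expect_affine p1 p2 pol n s f f' k :
  expect p1 p2 pol n s (fun t => f t - f' t + k)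
  = expect p1 p2 pol n s f - expect p1 p2 pol n s f' + k.
Proof.
  revert s; induction n as [|n IH]; intro s; cbn [expect]; [reflexivity|].
  rewrite !IH; unfold pb; ring.
Qed.

Section PoissonEquation.

Variables (p1 p2 : R) (pol : state -> nat) (reach : state -> Prop).
Hypotheses (hp1 : 0 <= p1 <= 1) (hp2 : 0 <= p2 <= 1).
Hypothesis reach_next : forall s b1 b2, reach s -> reach (next s (pol s) b1 b2).

Lemma expect_mono n s f f' :
  (forall t, reach t -> f t <= f' t) -> reach s ->
  expect p1 p2 pol n s f <= expect p1 p2 pol n s f'.
Proof.
  revert s; induction n as [|n IH]; intros s Hf Hs; cbn [expect]; [auto|].
  unfold pb; repeat apply Rplus_le_compat;
    apply Rmult_le_compat_l; try (apply Rmult_le_pos; lra); apply IH; auto.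
Qed.

Lemma expect_ext n s f f' :
  (forall t, reach t -> f t = f' t) -> reach s ->
  expect p1 p2 pol n s f = expect p1 p2 pol n s f'.
Proof.
  intros Hf Hs; apply Rle_antisym; apply expect_mono; auto;
    intros t Ht; rewrite (Hf t Ht); apply Rle_refl.
Qed.

Lemma expect_bounded n s f M :
  (forall t, reach t -> -M <= f t <= M) -> reach s ->
  -M <= expect p1 p2 pol n s f <= M.
Proof.
  intros Hf Hs; split.
  - rewrite <- (expect_const p1 p2 pol n s (-M)).
    apply expect_mono; [intros t Ht; apply Hf|]; auto.
  - rewrite <- (expect_const p1 p2 pol n s M).
    apply expect_mono; [intros t Ht; apply Hf|]; auto.
Qed.

Variables (Ct Ch g M : R) (h : state -> R).
Hypothesis reach_origin : reach (0%nat, 0%nat).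
Hypothesis h_bounded : forall s, reach s -> -M <= h s <= M.
Hypothesis poisson : forall s, reach s ->
  h s + g = cost Ct Ch s (pol s) + step p1 p2 pol h s.

Lemma sum_expect_cost N :
  sum_f_R0 (fun n => expect p1 p2 pol n (0%nat, 0%nat)
                        (fun s => cost Ct Ch s (pol s))) N
  = INR (S N) * g + h (0%nat, 0%nat) - expect p1 p2 pol (S N) (0%nat, 0%nat) h.
Proof.
  assert (Hn : forall n, expect p1 p2 pol n (0%nat, 0%nat) (fun s => cost Ct Ch s (pol s))
    = expect p1 p2 pol n (0%nat, 0%nat) h - expect p1 p2 pol (S n) (0%nat, 0%nat) h + g).
  { intro n. rewrite expect_S, <- expect_affine.
    apply expect_ext; [|exact reach_origin].
    intros t Ht. specialize (poisson t Ht). lra. }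
  induction N as [|N IH]; cbn [sum_f_R0].
  - rewrite Hn. simpl. ring.
  - rewrite IH, Hn, (S_INR (S N)). ring.
Qed.

Lemma V_eq_of_poisson : V p1 p2 Ct Ch pol = g.
Proof.
  unfold V.
  assert (Hlim : is_lim_seq (avg_cost p1 p2 Ct Ch pol) g).
  { apply is_lim_seq_ext with
      (fun N => g + (h (0%nat, 0%nat) - expect p1 p2 pol (S N) (0%nat, 0%nat) h) / INR (S N)).
    - intro N. unfold avg_cost. rewrite sum_expect_cost.
      field. apply not_0_INR. discriminate.
    - apply is_lim_seq_bounded_over_n with (M := 2 * M). intro N.
      pose proof (h_bounded _ reach_origin).
      pose proof (expect_bounded (S N) _ h M h_bounded reach_origin). lra. }
  rewrite (is_lim_seq_unique _ _ Hlim). reflexivity.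
Qed.

End PoissonEquation.

(** * The threshold policy *)

Ltac threshold_cases :=
  unfold thr_policy; repeat match goal with
  | |- context [Nat.eqb ?a ?b] => destruct (Nat.eqb_spec a b)
  | |- context [Nat.ltb ?a ?b] => destruct (Nat.ltb_spec a b)
  | |- context [Nat.leb ?a ?b] => destruct (Nat.leb_spec a b)
  end; try nia.

Definition swap (s : state) : state := (snd s, fst s).

Definition arrive (z : state) (b1 b2 : bool) : state :=
  ((if b1 then S (fst z) else fst z), (if b2 then S (snd z) else snd z)).

Lemma arrive_swap z b1 b2 : arrive (swap z) b2 b1 = swap (arrive z b1 b2).
Proof. reflexivity. Qed.

Lemma thr_policy_swap L1 L2 s : thr_policy L2 L1 (swap s) = thr_policy L1 L2 s.
Proof. destruct s as [i j]; unfold swap; simpl; threshold_cases. Qed.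

Section ThresholdPolicy.

Variables (L1 L2 : nat).

Lemma thr_policy_binary s : thr_policy L1 L2 s = 0%nat \/ thr_policy L1 L2 s = 1%nat.
Proof. destruct s as [i j]; threshold_cases. Qed.

Lemma thr_policy_wait i : (i <= L1)%nat -> thr_policy L1 L2 (i, 0%nat) = 0%nat.
Proof. intro; threshold_cases. Qed.

Lemma thr_policy_send i : (L1 < i)%nat -> thr_policy L1 L2 (i, 0%nat) = 1%nat.
Proof. intro; threshold_cases. Qed.

Lemma thr_policy_xor i j :
  (1 <= i)%nat -> (1 <= j)%nat -> thr_policy L1 L2 (i, j) = 1%nat.
Proof. intros; threshold_cases. Qed.

Definition post (s : state) : state :=
  ((fst s - thr_policy L1 L2 s)%nat, (snd s - thr_policy L1 L2 s)%nat).

Lemma next_post s b1 b2 : next s (thr_policy L1 L2 s) b1 b2 = arrive (post s) b1 b2.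
Proof.
  unfold post, arrive; destruct (thr_policy_binary s) as [-> | ->];
    destruct s as [i j]; simpl; destruct b1, b2; f_equal; lia.
Qed.

Lemma post_wait i : (i <= L1)%nat -> post (i, 0%nat) = (i, 0%nat).
Proof. intro; unfold post; rewrite thr_policy_wait by assumption; simpl; f_equal; lia. Qed.

Lemma post_send i : (L1 < i)%nat -> post (i, 0%nat) = ((i - 1)%nat, 0%nat).
Proof. intro; unfold post; rewrite thr_policy_send by assumption; reflexivity. Qed.

Lemma post_xor i j :
  (1 <= i)%nat -> (1 <= j)%nat -> post (i, j) = ((i - 1)%nat, (j - 1)%nat).
Proof. intros; unfold post; rewrite thr_policy_xor by assumption; reflexivity. Qed.

Definition cross (s : state) : Prop :=
  (snd s <= 1 /\ fst s <= L1 + 1)%nat \/ (fst s <= 1 /\ snd s <= L2 + 1)%nat.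

Definition axes (z : state) : Prop :=
  (snd z = 0 /\ fst z <= L1)%nat \/ (fst z = 0 /\ snd z <= L2)%nat.

Lemma post_axes s : cross s -> axes (post s).
Proof. destruct s as [i j]; unfold cross, axes, post; simpl; intro; threshold_cases. Qed.

Lemma cross_next s b1 b2 : cross s -> cross (next s (thr_policy L1 L2 s) b1 b2).
Proof.
  intro Hs; rewrite next_post.
  destruct (post_axes s Hs) as [[Hj Hi] | [Hi Hj]]; destruct (post s) as [i j];
    unfold cross, arrive; simpl in *; destruct b1, b2; simpl; lia.
Qed.

Lemma cross_bounded (f : state -> R) : exists M, forall s, cross s -> -M <= f s <= M.
Proof.
  set (n := (L1 + L2 + 2)%nat).
  destruct (list_bounded f (list_prod (seq 0 n) (seq 0 n))) as [M HM].
  exists M. intros [i j] Hs. apply HM, in_prod_iff.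
  rewrite !in_seq. unfold cross, n in *; simpl in Hs; lia.
Qed.

End ThresholdPolicy.

Lemma post_swap L1 L2 s : post L2 L1 (swap s) = swap (post L1 L2 s).
Proof. unfold post; rewrite thr_policy_swap; reflexivity. Qed.

Definition thr_cost (Ct Ch : R) (L1 L2 : nat) (s : state) : R :=
  cost Ct Ch s (thr_policy L1 L2 s).

Lemma thr_cost_swap Ct Ch L1 L2 s :
  thr_cost Ct Ch L2 L1 (swap s) = thr_cost Ct Ch L1 L2 s.
Proof.
  unfold thr_cost; rewrite thr_policy_swap.
  destruct s as [i j]; unfold cost, swap; simpl; ring.
Qed.

Section ThresholdCost.

Variables (Ct Ch : R) (L1 L2 : nat).

Lemma thr_cost_wait i : (i <= L1)%nat -> thr_cost Ct Ch L1 L2 (i, 0%nat) = Ch * INR i.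
Proof.
  intro; unfold thr_cost, cost; rewrite thr_policy_wait by assumption.
  rewrite !Nat.sub_0_r; simpl; ring.
Qed.

Lemma thr_cost_send i :
  (L1 < i)%nat -> thr_cost Ct Ch L1 L2 (i, 0%nat) = Ch * INR (i - 1) + Ct.
Proof. intro; unfold thr_cost, cost; rewrite thr_policy_send by assumption; simpl; ring. Qed.

Lemma thr_cost_xor i j : (1 <= i)%nat -> (1 <= j)%nat ->
  thr_cost Ct Ch L1 L2 (i, j) = Ch * (INR (i - 1) + INR (j - 1)) + Ct.
Proof. intros; unfold thr_cost, cost; rewrite thr_policy_xor by assumption; simpl; ring. Qed.

End ThresholdCost.

(** * The post-decision walk on the axes *)

Definition post_expect (p1 p2 : R) (f : state -> R) (z : state) : R :=
      pb p1 false * pb p2 false * f (arrive z false false)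
    + pb p1 true  * pb p2 false * f (arrive z true false)
    + pb p1 false * pb p2 true  * f (arrive z false true)
    + pb p1 true  * pb p2 true  * f (arrive z true true).

Lemma step_thr_policy p1 p2 L1 L2 f s :
  step p1 p2 (thr_policy L1 L2) f s = post_expect p1 p2 f (post L1 L2 s).
Proof. unfold step, post_expect; rewrite !next_post; reflexivity. Qed.

Lemma post_expect_ext p1 p2 f f' z :
  (forall s, f s = f' s) -> post_expect p1 p2 f z = post_expect p1 p2 f' z.
Proof. intro H; unfold post_expect; rewrite !H; reflexivity. Qed.

Lemma post_expect_swap p1 p2 f z :
  post_expect p2 p1 f (swap z) = post_expect p1 p2 (fun s => f (swap s)) z.
Proof. unfold post_expect; rewrite !arrive_swap; ring. Qed.

Definition only1 (p1 p2 : R) : R := p1 * (1 - p2).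
Definition only2 (p1 p2 : R) : R := (1 - p1) * p2.

Lemma only1_swap p1 p2 : only1 p2 p1 = only2 p1 p2.
Proof. unfold only1, only2; ring. Qed.

Section Rates.

Variables (p1 p2 : R).
Hypotheses (hp1 : 0 < p1 < 1) (hp2 : 0 < p2 < 1).

Lemma alpha_pos : 0 < alpha p1 p2.
Proof. unfold alpha; apply Rdiv_lt_0_compat; apply Rmult_lt_0_compat; lra. Qed.

Lemma only2_pos : 0 < only2 p1 p2.
Proof. unfold only2; apply Rmult_lt_0_compat; lra. Qed.

Lemma only2_alpha : only2 p1 p2 * alpha p1 p2 = only1 p1 p2.
Proof. unfold only2, alpha, only1; field; lra. Qed.

Lemma alpha_swap : alpha p2 p1 = / alpha p1 p2.
Proof. unfold alpha; field; lra. Qed.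

Lemma alpha_neq_1 : p1 <> p2 -> alpha p1 p2 <> 1.
Proof.
  intros Hp Ha. pose proof only2_alpha as H. rewrite Ha in H.
  unfold only1, only2 in H. apply Hp; nra.
Qed.

End Rates.

Definition mean_cost p1 p2 Ct Ch L1 L2 : state -> R :=
  post_expect p1 p2 (thr_cost Ct Ch L1 L2).

Section MeanCost.

Variables (p1 p2 Ct Ch : R) (L1 L2 : nat).

Lemma mean_cost_origin :
  mean_cost p1 p2 Ct Ch L1 L2 (0%nat, 0%nat)
  = Ct * p1 * p2 + only1 p1 p2 * thr_cost Ct Ch L1 L2 (1%nat, 0%nat)
    + only2 p1 p2 * thr_cost Ct Ch L1 L2 (0%nat, 1%nat).
Proof.
  unfold mean_cost, post_expect, arrive; cbn [fst snd].
  rewrite (thr_cost_wait Ct Ch L1 L2 0), (thr_cost_xor Ct Ch L1 L2 1 1) by lia.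
  unfold pb, only1, only2; simpl; ring.
Qed.

Lemma mean_cost_axis i : (1 <= i < L1)%nat ->
  mean_cost p1 p2 Ct Ch L1 L2 (i, 0%nat)
  = Ch * INR i + Ct * p2 + Ch * (only1 p1 p2 - only2 p1 p2).
Proof.
  intro Hi; destruct i as [|i]; [lia|].
  unfold mean_cost, post_expect, arrive; cbn [fst snd].
  rewrite !thr_cost_wait, !thr_cost_xor by lia.
  replace (S (S i) - 1)%nat with (S i) by lia. replace (S i - 1)%nat with i by lia.
  unfold pb, only1, only2; rewrite !S_INR; simpl; ring.
Qed.

Lemma mean_cost_axis_end : (1 <= L1)%nat ->
  mean_cost p1 p2 Ct Ch L1 L2 (L1, 0%nat)
  = Ch * INR L1 + Ct * (p2 + only1 p1 p2) - Ch * only2 p1 p2.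
Proof.
  intro HL; unfold mean_cost, post_expect, arrive; cbn [fst snd].
  rewrite thr_cost_wait, thr_cost_send, !thr_cost_xor by lia.
  replace (S L1 - 1)%nat with L1 by lia.
  destruct L1 as [|L]; [lia|].
  replace (S L - 1)%nat with L by lia.
  unfold pb, only1, only2; rewrite !S_INR; simpl; ring.
Qed.

End MeanCost.

Definition axis_weight (p1 p2 Ct Ch : R) (L : nat) : R :=
  let a := alpha p1 p2 in
  Ct * (p2 * sum1 (pow a) L + only1 p1 p2 * a ^ L) + Ch * sum1 (fun i => INR i * a ^ i) L.

Lemma axis_weighted_cost p1 p2 Ct Ch L1 L2 :
  0 < p1 < 1 -> 0 < p2 < 1 ->
  only1 p1 p2 * thr_cost Ct Ch L1 L2 (1%nat, 0%nat)
  + sum1 (fun i => alpha p1 p2 ^ i * mean_cost p1 p2 Ct Ch L1 L2 (i, 0%nat)) L1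
  = axis_weight p1 p2 Ct Ch L1.
Proof.
  intros hp1 hp2. unfold axis_weight.
  pose proof (only2_alpha p1 p2 hp1 hp2) as Hda.
  destruct L1 as [|L].
  - rewrite thr_cost_send by lia. simpl. ring.
  - rewrite thr_cost_wait by lia. cbn [sum1].
    rewrite mean_cost_axis_end by lia.
    rewrite (sum1_ext _ (fun i => alpha p1 p2 ^ i * (Ch * INR i + Ct * p2
               + Ch * (alpha p1 p2 * only2 p1 p2 - only2 p1 p2)))).
    2:{ intros i Hi. rewrite mean_cost_axis by lia. rewrite <- Hda. ring. }
    rewrite sum1_pow_affine, <- Hda. simpl. ring.
Qed.

(* The solution of [only2 * E i = only1 * E (i + 1) + mean_cost (i, 0) - g] with
   [E (L1 + 1) = 0]: multiplying by [alpha ^ i] turns the recursion into a telescoping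
   sum, [only2 * alpha ^ i * E i = sum_(k = i .. L1) alpha ^ k * (mean_cost (k, 0) - g)]. *)
Definition axis_incr p1 p2 Ct Ch g L1 L2 (i : nat) : R :=
  let f k := alpha p1 p2 ^ k * (mean_cost p1 p2 Ct Ch L1 L2 (k, 0%nat) - g) in
  (sum1 f L1 - sum1 f (i - 1)) / (only2 p1 p2 * alpha p1 p2 ^ i).

(* Relative values of the post-decision walk, given its increments along each axis. *)
Definition post_value (E F : nat -> R) (z : state) : R := sum1 E (fst z) + sum1 F (snd z).

Definition rel_value Ct Ch L1 L2 (E F : nat -> R) (s : state) : R :=
  thr_cost Ct Ch L1 L2 s + post_value E F (post L1 L2 s).

Lemma post_value_swap E F z : post_value E F (swap z) = post_value F E z.
Proof. unfold post_value; simpl; ring. Qed.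

Lemma rel_value_swap Ct Ch L1 L2 E F s :
  rel_value Ct Ch L2 L1 F E (swap s) = rel_value Ct Ch L1 L2 E F s.
Proof. unfold rel_value; rewrite thr_cost_swap, post_swap, post_value_swap; reflexivity. Qed.

Section AxisPoisson.

Variables (p1 p2 Ct Ch g : R) (L1 L2 : nat) (F : nat -> R).
Hypotheses (hp1 : 0 < p1 < 1) (hp2 : 0 < p2 < 1).

Local Notation E := (axis_incr p1 p2 Ct Ch g L1 L2).

Lemma axis_incr_recursion i : (1 <= i <= L1)%nat ->
  only2 p1 p2 * E i = only1 p1 p2 * E (S i) + mean_cost p1 p2 Ct Ch L1 L2 (i, 0%nat) - g.
Proof.
  intro Hi. pose proof (alpha_pos p1 p2 hp1 hp2). pose proof (only2_pos p1 p2 hp1 hp2).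
  pose proof (pow_lt _ i H).
  unfold axis_incr; rewrite <- (only2_alpha p1 p2 hp1 hp2).
  replace (S i - 1)%nat with (S (i - 1)) by lia. cbn [sum1].
  replace (S (i - 1)) with i by lia. simpl pow. field; lra.
Qed.

Lemma axis_incr_last : E (S L1) = 0.
Proof. unfold axis_incr; simpl; rewrite Nat.sub_0_r; unfold Rdiv; ring. Qed.

Lemma axis_incr_first :
  only1 p1 p2 * E 1
  = sum1 (fun k => alpha p1 p2 ^ k * (mean_cost p1 p2 Ct Ch L1 L2 (k, 0%nat) - g)) L1.
Proof.
  pose proof (alpha_pos p1 p2 hp1 hp2). pose proof (only2_pos p1 p2 hp1 hp2).
  unfold axis_incr; rewrite <- (only2_alpha p1 p2 hp1 hp2).
  simpl; field; lra.
Qed.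

Lemma post_value_post_one : post_value E F (post L1 L2 (1%nat, 0%nat)) = E 1.
Proof.
  destruct (Nat.eq_dec L1 0) as [HL|HL].
  - assert (E 1 = 0) by (rewrite <- axis_incr_last; f_equal; lia).
    rewrite post_send by lia. unfold post_value; simpl; lra.
  - rewrite post_wait by lia. unfold post_value; simpl; ring.
Qed.

Lemma poisson_axis i : (1 <= i <= L1)%nat ->
  post_value E F (i, 0%nat) + g
  = post_expect p1 p2 (rel_value Ct Ch L1 L2 E F) (i, 0%nat).
Proof.
  intro Hi. pose proof (axis_incr_recursion i Hi) as Hrec.
  destruct i as [|i]; [lia|].
  assert (Hnext : post_value E F (post L1 L2 (S (S i), 0%nat)) = sum1 E (S (S i))).
  { destruct (Compare_dec.le_lt_dec (S (S i)) L1).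
    - rewrite post_wait by assumption. unfold post_value; simpl; ring.
    - assert (E (S (S i)) = 0)
        by (replace (S (S i)) with (S L1) by lia; apply axis_incr_last).
      rewrite post_send by assumption. unfold post_value; simpl; lra. }
  unfold mean_cost, post_expect, arrive in Hrec |- *; cbn [fst snd] in Hrec |- *.
  unfold rel_value. rewrite Hnext, post_wait, !post_xor by lia.
  replace (S i - 1)%nat with i by lia. replace (S (S i) - 1)%nat with (S i) by lia.
  unfold post_value; cbn [fst snd sum1 Nat.sub] in *.
  unfold pb, only1, only2 in *. lra.
Qed.

End AxisPoisson.

Section ThresholdPoisson.

Variables (p1 p2 Ct Ch : R) (L1 L2 : nat).
Hypotheses (hp1 : 0 < p1 < 1) (hp2 : 0 < p2 < 1) (hp12 : p1 <> p2).

Local Notation g := (objective p1 p2 Ct Ch L1 L2).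
Local Notation E := (axis_incr p1 p2 Ct Ch g L1 L2).
Local Notation F := (axis_incr p2 p1 Ct Ch g L2 L1).

Lemma objective_decomposition :
  g = pi00 p1 p2 L1 L2
      * (Ct * p1 * p2 + axis_weight p1 p2 Ct Ch L1 + axis_weight p2 p1 Ct Ch L2).
Proof.
  pose proof (alpha_pos p1 p2 hp1 hp2) as Ha.
  unfold objective, tau, lambda, axis_weight, pi_i0, pi_0j.
  rewrite (alpha_swap p1 p2 hp1 hp2).
  set (a := alpha p1 p2). set (P := pi00 p1 p2 L1 L2).
  rewrite (sum1_ext (fun i => a ^ i * P) (fun i => P * pow a i)) by (intros; ring).
  rewrite (sum1_ext (fun j => P / a ^ j) (fun j => P * pow (/ a) j))
    by (intros; unfold Rdiv; rewrite pow_inv; ring).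
  rewrite (sum1_ext (fun i => INR i * (a ^ i * P)) (fun i => P * (INR i * a ^ i)))
    by (intros; ring).
  rewrite (sum1_ext (fun j => INR j * (P / a ^ j)) (fun j => P * (INR j * (/ a) ^ j)))
    by (intros; unfold Rdiv; rewrite pow_inv; ring).
  rewrite !sum1_scal. unfold Rdiv. rewrite <- pow_inv.
  unfold only1; ring.
Qed.

Lemma pi00_normalized :
  pi00 p1 p2 L1 L2 * (1 + sum1 (pow (alpha p1 p2)) L1 + sum1 (pow (alpha p2 p1)) L2) = 1.
Proof.
  pose proof (sum1_pow_nonneg _ L1 (alpha_pos p1 p2 hp1 hp2)).
  pose proof (sum1_pow_nonneg _ L2 (alpha_pos p2 p1 hp2 hp1)).
  unfold pi00. rewrite <- pow_inv, <- (alpha_swap p1 p2 hp1 hp2), !geometric_sum1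
    by (apply alpha_neq_1; auto).
  field; lra.
Qed.

Lemma origin_balance :
  g = mean_cost p1 p2 Ct Ch L1 L2 (0%nat, 0%nat) + only1 p1 p2 * E 1 + only2 p1 p2 * F 1.
Proof.
  pose proof (axis_incr_first p1 p2 Ct Ch g L1 L2 hp1 hp2) as HE.
  pose proof (axis_incr_first p2 p1 Ct Ch g L2 L1 hp2 hp1) as HF.
  rewrite sum1_mul_sub in HE, HF. rewrite only1_swap in HF.
  pose proof (axis_weighted_cost p1 p2 Ct Ch L1 L2 hp1 hp2) as W1.
  pose proof (axis_weighted_cost p2 p1 Ct Ch L2 L1 hp2 hp1) as W2.
  change (1%nat, 0%nat) with (swap (0%nat, 1%nat)) in W2.
  rewrite thr_cost_swap, only1_swap in W2.
  rewrite mean_cost_origin, HE, HF.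
  pose proof objective_decomposition as D. pose proof pi00_normalized as N.
  set (S1 := sum1 (pow (alpha p1 p2)) L1) in *.
  set (S2 := sum1 (pow (alpha p2 p1)) L2) in *.
  set (K := Ct * p1 * p2 + axis_weight p1 p2 Ct Ch L1 + axis_weight p2 p1 Ct Ch L2) in *.
  assert (g * (1 + S1 + S2) = K).
  { rewrite D at 1. transitivity (pi00 p1 p2 L1 L2 * (1 + S1 + S2) * K); [ring|].
    rewrite N; ring. }
  unfold K in *. lra.
Qed.

Lemma poisson_origin :
  post_value E F (0%nat, 0%nat) + g
  = post_expect p1 p2 (rel_value Ct Ch L1 L2 E F) (0%nat, 0%nat).
Proof.
  pose proof origin_balance as B.
  pose proof (post_value_post_one p1 p2 Ct Ch g L1 L2 F) as H10.
  pose proof (post_value_post_one p2 p1 Ct Ch g L2 L1 E) as H01.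
  change (1%nat, 0%nat) with (swap (0%nat, 1%nat)) in H01.
  rewrite post_swap, post_value_swap in H01.
  unfold mean_cost, post_expect, arrive in B |- *; cbn [fst snd] in B |- *.
  unfold rel_value. rewrite (post_wait L1 L2 0), (post_xor L1 L2 1 1), H10, H01 by lia.
  unfold post_value; cbn [fst snd sum1 Nat.sub]. unfold pb, only1, only2 in *. lra.
Qed.

Lemma poisson_post z : axes L1 L2 z ->
  post_value E F z + g = post_expect p1 p2 (rel_value Ct Ch L1 L2 E F) z.
Proof.
  destruct z as [i j]; intros [[Hj Hi] | [Hi Hj]]; cbn [fst snd] in *; subst.
  - destruct i as [|i]; [exact poisson_origin|].
    apply poisson_axis; auto; lia.
  - destruct j as [|j]; [exact poisson_origin|].
    change (0%nat, S j) with (swap (S j, 0%nat)).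
    rewrite post_value_swap, post_expect_swap.
    rewrite (poisson_axis p2 p1 Ct Ch g L2 L1 E hp2 hp1 (S j)) by lia.
    apply post_expect_ext; intro s. symmetry; apply rel_value_swap.
Qed.

Lemma V_thr_objective : V_thr p1 p2 Ct Ch L1 L2 = g.
Proof.
  destruct (cross_bounded L1 L2 (rel_value Ct Ch L1 L2 E F)) as [M HM].
  apply V_eq_of_poisson with (reach := cross L1 L2) (M := M)
    (h := rel_value Ct Ch L1 L2 E F); try lra.
  - apply cross_next.
  - unfold cross; simpl; lia.
  - exact HM.
  - intros s Hs. rewrite step_thr_policy, <- (poisson_post _ (post_axes L1 L2 s Hs)).
    unfold rel_value, thr_cost. lra.
Qed.

End ThresholdPoisson.

Theorem theorem4 (p1 p2 Ct Ch : R)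
  (hp1 : 0 < p1 < 1) (hp2 : 0 < p2 < 1) (hp12 : p1 <> p2)
  (hCt : 0 < Ct) (hCh : 0 < Ch) (L1s L2s : nat) :
  (forall L1 L2 : nat, V_thr p1 p2 Ct Ch L1s L2s <= V_thr p1 p2 Ct Ch L1 L2)
  <->
  (forall L1 L2 : nat, objective p1 p2 Ct Ch L1s L2s <= objective p1 p2 Ct Ch L1 L2).
Proof.
  split; intros H L1 L2; specialize (H L1 L2);
    rewrite !V_thr_objective in * by assumption; exact H.
Qed.
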